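(* Let $G$ be a group generated by $x_1,\dots,x_n$, with finite commutator subgroup $C=[G,G]$, such that $G/C$ is free abelian of rank $n$ with basis the images of $x_1,\dots,x_n$. Let $Z$ be the center of $G$ and $Z_{CG}=Z\cap C$. Then there is a subgroup $\widetilde Z\le Z$ with $\widetilde Z\cong\mathbb Z^n$ and $\widetilde Z\cap Z_{CG}$ trivial such that $Z=\widetilde Z\,Z_{CG}$ (a direct product). Moreover $\mathrm{rank}(Z)=n+\mathrm{rank}(Z_{CG})$.
   Context: The rank of a group is the minimal cardinality of a generating set. *)

From mathcomp Require Import all_boot all_algebra.
From Stdlib Require Import List.
Set Implicit Arguments. Unset Strict Implicit. Unset Printing Implicit Defensive.
Import GRing.Theory.
Local Open Scope ring_scope.

Record group := Group {
  carrier :> Type;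
  gmul : carrier -> carrier -> carrier;
  ginv : carrier -> carrier;
  gone : carrier;
  gmulA : forall a b c, gmul a (gmul b c) = gmul (gmul a b) c;
  gmul1 : forall a, gmul gone a = a;
  gmulV : forall a, gmul (ginv a) a = gone
}.

Section Defs.
Variable G : group.
Local Notation "a * b" := (gmul a b).

Definition subgroup (S : G -> Prop) : Prop :=
  S (gone G) /\ (forall a b, S a -> S b -> S (a * b)) /\ (forall a, S a -> S (ginv a)).

Definition gen (A : G -> Prop) : G -> Prop :=
  fun g => forall S, subgroup S -> (forall a, A a -> S a) -> S g.

Definition commutator (a b : G) : G := ginv a * ginv b * a * b.

Definition derived : G -> Prop :=
  gen (fun g => exists a b, g = commutator a b).

Definition center : G -> Prop := fun g => forall h, g * h = h * g.

Definition finite_set (S : G -> Prop) : Prop :=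
  exists s : list G, forall g, S g -> In g s.

Definition zpow (g : G) (k : int) : G :=
  match k with
  | Posz m => iter m (gmul g) (gone G)
  | Negz m => ginv (iter m.+1 (gmul g) (gone G))
  end.

Definition zprod (n : nat) (x : 'I_n -> G) (k : 'I_n -> int) : G :=
  foldr (fun i acc => zpow (x i) (k i) * acc) (gone G) (enum 'I_n).

Definition generates (S : G -> Prop) (m : nat) (y : 'I_m -> G) : Prop :=
  forall g, S g <-> gen (fun a => exists i, a = y i) g.

Definition has_rank (S : G -> Prop) (r : nat) : Prop :=
  (exists y : 'I_r -> G, generates S y) /\
  (forall (m : nat) (y : 'I_m -> G), generates S y -> (r <= m)%N).

Definition iso_Zn (S : G -> Prop) (n : nat) : Prop :=
  exists f : 'rV[int]_n -> G,
    (forall a b, f (a + b) = f a * f b) /\ injective f /\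
    (forall g, S g <-> exists a, f a = g).
End Defs.

(* The center Z of G maps to G/C = Z^n with kernel Z ∩ C. As C is finite,
   pigeonholing the commutators [x_j, x_i^k] gives D > 0 with every x_i^D
   central, so the image of Z is a full-rank lattice and has a basis; lifting
   it to Z gives a copy of Z^n with Z = Z^n × (Z ∩ C).
   For the rank, m generators of Z project to an integer matrix with a left
   inverse; its Smith normal form gives a unimodular change of generators after
   which n of them project onto a basis and the other m - n generate Z ∩ C. *)

From mathcomp Require Import all_boot all_algebra.
From mathcomp Require Import boolp.
From Stdlib Require Import Setoid Morphisms.
From Stdlib Require List.
Set Implicit Arguments. Unset Strict Implicit. Unset Printing Implicit Defensive.
Import GRing.Theory.
Local Notation "a ** b" := (gmul a b) (at level 40, left associativity).

Section GroupLaws.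
Variable G : group.
Implicit Types a b c : G.

Lemma gmulVr a : a ** ginv a = gone G.
Proof.
have h : ginv (ginv a) ** ginv a = gone G := gmulV _.
by rewrite -(gmul1 (a ** ginv a)) -{1}h -gmulA (gmulA (ginv a)) gmulV gmul1 gmulV.
Qed.

Lemma gmul1r a : a ** gone G = a.
Proof. by rewrite -(gmulV a) gmulA gmulVr gmul1. Qed.

Lemma gmulK a b : ginv a ** (a ** b) = b.
Proof. by rewrite gmulA gmulV gmul1. Qed.

Lemma gmulKV a b : a ** (ginv a ** b) = b.
Proof. by rewrite gmulA gmulVr gmul1. Qed.

Lemma gmulI a b c : a ** b = a ** c -> b = c.
Proof. by move=> h; rewrite -(gmulK a b) h gmulK. Qed.

Lemma gmulIr a b c : b ** a = c ** a -> b = c.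
Proof. by move=> h; rewrite -(gmul1r b) -(gmulVr a) gmulA h -gmulA gmulVr gmul1r. Qed.

Lemma ginv_uniq a b : a ** b = gone G -> ginv a = b.
Proof. by move=> h; apply: (@gmulI a); rewrite gmulVr h. Qed.

Lemma ginvK a : ginv (ginv a) = a.
Proof. by apply: ginv_uniq; rewrite gmulV. Qed.

Lemma ginvM a b : ginv (a ** b) = ginv b ** ginv a.
Proof. by apply: ginv_uniq; rewrite -gmulA gmulKV gmulVr. Qed.

Lemma ginv1 : ginv (gone G) = gone G.
Proof. by apply: ginv_uniq; rewrite gmul1. Qed.

End GroupLaws.

Ltac gsimpl :=
  repeat rewrite ?ginvM ?ginvK ?ginv1 -?gmulA ?gmulK ?gmulKV ?gmul1 ?gmul1r ?gmulVr ?gmulV.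

Section Subgroups.
Variable G : group.
Implicit Types (a b g : G) (S A : G -> Prop).

Lemma subgroup1 S : subgroup S -> S (gone G).
Proof. by case. Qed.

Lemma subgroupM S a b : subgroup S -> S a -> S b -> S (a ** b).
Proof. by case=> _ []; auto. Qed.

Lemma subgroupV S a : subgroup S -> S a -> S (ginv a).
Proof. by case=> _ []; auto. Qed.

Lemma subgroupT : subgroup (fun _ : G => True).
Proof. by []. Qed.

Lemma subgroupI S1 S2 : subgroup S1 -> subgroup S2 -> subgroup (fun g => S1 g /\ S2 g).
Proof.
move=> h1 h2; split; first by split; apply: subgroup1.
split=> [a b [a1 a2] [b1 b2]|a [a1 a2]]; split; by [
  exact: subgroupM h1 a1 b1 | exact: subgroupM h2 a2 b2 |
  exact: subgroupV h1 a1 | exact: subgroupV h2 a2].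
Qed.

Lemma gen_subgroup A : subgroup (gen A).
Proof.
split; first by move=> S [].
split=> [a b ha hb S hS hA|a ha S hS hA]; first exact: subgroupM (ha S hS hA) (hb S hS hA).
exact: subgroupV (ha S hS hA).
Qed.

Lemma mem_gen A a : A a -> gen A a.
Proof. by move=> h S _ hA; apply: hA. Qed.

Lemma gen_sub A S : subgroup S -> (forall a, A a -> S a) -> forall g, gen A g -> S g.
Proof. by move=> hS hA g hg; apply: hg. Qed.

End Subgroups.

Arguments subgroupT {G}.

Section Centralizers.
Variable G : group.
Implicit Types (a b g h : G) (A : G -> Prop).

Definition centralizer g : G -> Prop := fun h => g ** h = h ** g.

Lemma centralizer_subgroup g : subgroup (centralizer g).
Proof.
split; first by rewrite /centralizer gmul1 gmul1r.
split=> [a b ha hb|a ha]; first by rewrite /centralizer gmulA ha -gmulA hb gmulA.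
by apply: (@gmulI _ a); rewrite /centralizer gmulA -ha -gmulA gmulVr gmul1r gmulKV.
Qed.

Lemma center_subgroup : subgroup (@center G).
Proof.
split; first by move=> h; rewrite gmul1 gmul1r.
split=> [a b ha hb h|a ha h]; first by rewrite -gmulA hb gmulA ha gmulA.
by apply/esym/(subgroupV (centralizer_subgroup h)); rewrite /centralizer ha.
Qed.

Lemma center_abelian a b : center a -> center b -> a ** b = b ** a.
Proof. by move=> ha _; exact: ha. Qed.

Lemma center_gen A g :
  (forall h, gen A h) -> (forall a, A a -> g ** a = a ** g) -> center g.
Proof. by move=> hA hg h; exact: gen_sub (centralizer_subgroup g) hg h (hA h). Qed.

End Centralizers.

Arguments center_subgroup {G}.

Section Powers.
Variable G : group.
Implicit Types (g h : G) (S : G -> Prop).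

Lemma subgroup_zpow S g k : subgroup S -> S g -> S (zpow g k).
Proof.
move=> hS hg; have hn m : S (iter m (gmul g) (gone G)).
  by elim: m => [|m ih] /=; [apply: subgroup1 | apply: subgroupM].
by case: k => m; [exact: hn | apply: subgroupV => //; exact: hn].
Qed.

Lemma zpow_natS g (m : nat) : zpow g m.+1 = zpow g m ** g.
Proof.
elim: m => [|m ih]; first by rewrite /= gmul1 gmul1r.
by rewrite -[zpow g m.+2]/(g ** zpow g m.+1) [in LHS]ih gmulA.
Qed.

Lemma zpowS g (k : int) : zpow g (k + 1)%R = zpow g k ** g.
Proof.
case: k => [m|[|m]]; first by rewrite -zpow_natS -addn1.
  by rewrite /= gmul1r gmulV.
have -> : (Negz m.+1 + 1)%R = Negz m by rewrite !NegzE -(addn1 m.+1) PoszD opprD addrK.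
by rewrite /zpow [iter m.+2 _ _]/= ginvM -gmulA gmulV gmul1r.
Qed.

Lemma zpowSV g (k : int) : zpow g (k - 1)%R = zpow g k ** ginv g.
Proof. by rewrite -{2}(subrK 1%R k) zpowS -gmulA gmulVr gmul1r. Qed.

Lemma zpowD g (k l : int) : zpow g (k + l)%R = zpow g k ** zpow g l.
Proof.
elim/int_rect: l => [|l ih|l ih].
- by rewrite addr0 gmul1r.
- by rewrite -addn1 PoszD addrA !zpowS ih gmulA.
- by rewrite -addn1 PoszD opprD !addrA !zpowSV ih gmulA.
Qed.

Lemma zpow1 g : zpow g 1 = g.
Proof. by rewrite /= gmul1r. Qed.

Lemma zpowN g (k : int) : zpow g (- k)%R = ginv (zpow g k).
Proof. by apply/esym/ginv_uniq; rewrite -zpowD subrr. Qed.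

Lemma zpowM g h k : g ** h = h ** g -> zpow (g ** h) k = zpow g k ** zpow h k.
Proof.
move=> c; have ch m : centralizer g (zpow h m) by apply: subgroup_zpow (centralizer_subgroup g) c.
have hn (m : nat) : zpow (g ** h) m = zpow g m ** zpow h m.
  elim: m => [|m ih]; first by rewrite /= gmul1r.
  by rewrite !zpow_natS ih -!gmulA; congr (_ ** _); rewrite !gmulA (ch m).
case: k => m; first exact: hn.
have cm : zpow g m.+1 ** zpow h m.+1 = zpow h m.+1 ** zpow g m.+1.
  by apply/esym/(subgroup_zpow _ (centralizer_subgroup _)); rewrite /centralizer ch.
by rewrite NegzE !zpowN hn -ginvM cm.
Qed.

End Powers.

Section DerivedCongruence.
Variable G : group.
Implicit Types a b c h : G.

Lemma derived_subgroup : subgroup (@derived G).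
Proof. exact: gen_subgroup. Qed.

Lemma derived_commutator a b : derived (commutator a b).
Proof. by apply: mem_gen; exists a, b. Qed.

Lemma derived_conj c h : derived c -> derived (ginv h ** c ** h).
Proof.
move=> dc; move: h; apply: (gen_sub (S := fun c => forall h, derived (ginv h ** c ** h))) dc.
- split; first by move=> h; rewrite gmul1r gmulV; exact: subgroup1 derived_subgroup.
  split=> [a b ha hb h|a ha h].
    have -> : ginv h ** (a ** b) ** h = (ginv h ** a ** h) ** (ginv h ** b ** h) by gsimpl.
    exact: subgroupM derived_subgroup (ha h) (hb h).
  have -> : ginv h ** ginv a ** h = ginv (ginv h ** a ** h) by gsimpl.
  exact: subgroupV derived_subgroup (ha h).
- move=> _ [a [b ->]] h.
  have -> : ginv h ** commutator a b ** h = commutator (ginv h ** a ** h) (ginv h ** b ** h).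
    by rewrite /commutator; gsimpl.
  exact: derived_commutator.
Qed.

Definition eqC a b := derived (ginv a ** b).

Lemma eqC_refl a : eqC a a.
Proof. by rewrite /eqC gmulV; exact: subgroup1 derived_subgroup. Qed.

Lemma eqC_sym a b : eqC a b -> eqC b a.
Proof. by rewrite /eqC => h; have := subgroupV derived_subgroup h; gsimpl. Qed.

Lemma eqC_trans a b c : eqC a b -> eqC b c -> eqC a c.
Proof. by rewrite /eqC => h1 h2; have := subgroupM derived_subgroup h1 h2; gsimpl. Qed.

Lemma eqC_mul a a' b b' : eqC a a' -> eqC b b' -> eqC (a ** b) (a' ** b').
Proof.
rewrite /eqC => h1 h2.
by have := subgroupM derived_subgroup (derived_conj b h1) h2; rewrite ginvM; gsimpl.
Qed.

Lemma eqC_inv a b : eqC a b -> eqC (ginv a) (ginv b).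
Proof.
by rewrite /eqC => h; have := derived_conj (ginv b) (subgroupV derived_subgroup h); gsimpl.
Qed.

Lemma eqC_comm a b : eqC (a ** b) (b ** a).
Proof. by rewrite /eqC; have := derived_commutator b a; rewrite /commutator; gsimpl. Qed.

Lemma eqC_derived a b : eqC a b -> derived a -> derived b.
Proof. by rewrite /eqC => h1 h2; have := subgroupM derived_subgroup h2 h1; gsimpl. Qed.

End DerivedCongruence.

Arguments derived_subgroup {G}.

#[local] Instance eqC_equivalence G : Equivalence (@eqC G) :=
  Build_Equivalence _ (@eqC_refl G) (@eqC_sym G) (@eqC_trans G).

#[local] Instance gmul_eqC_proper G : Proper (@eqC G ==> @eqC G ==> @eqC G) (@gmul G).
Proof. by move=> a a' ha b b' hb; apply: eqC_mul. Qed.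

#[local] Instance ginv_eqC_proper G : Proper (@eqC G ==> @eqC G) (@ginv G).
Proof. by move=> a a' ha; apply: eqC_inv. Qed.

Local Open Scope ring_scope.

Section PowerProducts.
Variable G : group.
Implicit Types (S : G -> Prop).

(* [zprod_row y v] is [zprod y (v 0)], indexed by a row vector so that matrix
   algebra applies. *)
Definition zprod_seq m (y : 'I_m -> G) (s : seq 'I_m) (v : 'rV[int]_m) : G :=
  foldr (fun i acc => zpow (y i) (v 0 i) ** acc) (gone G) s.

Definition zprod_row m (y : 'I_m -> G) (v : 'rV[int]_m) : G := zprod_seq y (enum 'I_m) v.

Lemma subgroup_zprod_seq S m (y : 'I_m -> G) s (v : 'rV[int]_m) :
  subgroup S -> (forall i, S (zpow (y i) (v 0 i))) -> S (zprod_seq y s v).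
Proof. by move=> hS h; elim: s => [|i s ih] /=; [apply: subgroup1 | apply: subgroupM]. Qed.

Lemma subgroup_zprod_row S m (y : 'I_m -> G) v :
  subgroup S -> (forall i, S (y i)) -> S (zprod_row y v).
Proof. by move=> hS h; apply: subgroup_zprod_seq => // i; apply: subgroup_zpow. Qed.

Lemma zprod_seq0 m (y : 'I_m -> G) s : zprod_seq y s 0 = gone G.
Proof. by elim: s => //= i s ->; rewrite mxE gmul1. Qed.

Lemma zprod_row_delta m (y : 'I_m -> G) i (c : int) :
  zprod_row y (c *: delta_mx 0 i) = zpow (y i) c.
Proof.
have ind s : uniq s ->
    zprod_seq y s (c *: delta_mx 0 i) = if i \in s then zpow (y i) c else gone G.
  elim: s => //= j s ih /andP[js us]; rewrite ih // inE !mxE.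
  case: (eqVneq j i) js => [->|ne] js /=; first by rewrite (negPf js) mulr1 gmul1r.
  by rewrite mulr0 gmul1.
by rewrite /zprod_row ind ?enum_uniq ?mem_enum.
Qed.

(* Used with [eq] on an abelian subgroup and with [eqC] on all of [G]. *)
Section Congruence.
Variable eqv : G -> G -> Prop.
Context {eqv_equiv : Equivalence eqv}.
Context {gmul_proper : Proper (eqv ==> eqv ==> eqv) (@gmul G)}.
Context {ginv_proper : Proper (eqv ==> eqv) (@ginv G)}.

Lemma zpow_congr a b k : eqv a b -> eqv (zpow a k) (zpow b k).
Proof.
move=> ab; elim/int_rect: k => [|k ih|k ih]; first reflexivity.
  by rewrite -addn1 PoszD !zpowS ih ab; reflexivity.
by rewrite -addn1 PoszD opprD !zpowSV ih ab; reflexivity.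
Qed.

Lemma zprod_row_congr m (y y' : 'I_m -> G) v :
  (forall i, eqv (y i) (y' i)) -> eqv (zprod_row y v) (zprod_row y' v).
Proof.
move=> h; rewrite /zprod_row; elim: (enum 'I_m) => [|i s ih] /=; first reflexivity.
by rewrite ih (zpow_congr _ (h i)); reflexivity.
Qed.

Variable S : G -> Prop.
Hypothesis S_subgroup : subgroup S.
Hypothesis S_comm : forall a b, S a -> S b -> eqv (a ** b) (b ** a).
Variables (m : nat) (y : 'I_m -> G).
Hypothesis yS : forall i, S (y i).

Lemma zprod_seqD s v w : eqv (zprod_seq y s (v + w)) (zprod_seq y s v ** zprod_seq y s w).
Proof.
elim: s => [|i s ih] /=; first by rewrite gmul1; reflexivity.
have hv : S (zprod_seq y s v) by apply: subgroup_zprod_seq => // j; apply: subgroup_zpow.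
have hw : S (zpow (y i) (w 0 i)) by apply: subgroup_zpow.
rewrite mxE zpowD ih -!gmulA (gmulA (zpow _ (w _ _))) (S_comm hw hv) !gmulA; reflexivity.
Qed.

Lemma zprod_rowD v w : eqv (zprod_row y (v + w)) (zprod_row y v ** zprod_row y w).
Proof. exact: zprod_seqD. Qed.

Lemma zprod_rowN v : eqv (zprod_row y (- v)) (ginv (zprod_row y v)).
Proof.
have h := zprod_rowD (- v) v; rewrite addNr /zprod_row zprod_seq0 in h.
rewrite -[zprod_row y (- v)]gmul1r -(gmulVr (zprod_row y v)) gmulA -h gmul1; reflexivity.
Qed.

Lemma zpow_zprod_row v (t : int) : eqv (zpow (zprod_row y v) t) (zprod_row y (t *: v)).
Proof.
elim/int_rect: t => [|t ih|t ih].
- by rewrite scale0r /zprod_row zprod_seq0; reflexivity.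
- by rewrite -addn1 PoszD zpowS ih scalerDl scale1r zprod_rowD; reflexivity.
- by rewrite -addn1 PoszD opprD zpowSV ih scalerDl scaleN1r zprod_rowD zprod_rowN; reflexivity.
Qed.

Lemma zprod_row_mulmx k (U : 'M[int]_(k, m)) (e : 'rV[int]_k) :
  eqv (zprod_row (fun i => zprod_row y (row i U)) e) (zprod_row y (e *m U)).
Proof.
rewrite mulmx_sum_row /zprod_row -big_enum /=; elim: (enum 'I_k) => [|i s ih] /=.
  by rewrite big_nil zprod_seq0; reflexivity.
by rewrite big_cons ih (zpow_zprod_row _ (e 0 i)) zprod_seqD; reflexivity.
Qed.

End Congruence.
End PowerProducts.

Section AbelianProducts.
Variables (G : group) (S : G -> Prop).
Hypothesis S_subgroup : subgroup S.
Hypothesis S_abelian : forall a b, S a -> S b -> a ** b = b ** a.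

Lemma zprod_rowM m (p q : 'I_m -> G) v :
  (forall i, S (p i)) -> (forall i, S (q i)) ->
  zprod_row (fun i => p i ** q i) v = zprod_row p v ** zprod_row q v.
Proof.
move=> hp hq; rewrite /zprod_row; elim: (enum 'I_m) => [|i s ih] /=; first by rewrite gmul1.
have hps : S (zprod_seq p s v) by apply: subgroup_zprod_seq => // j; apply: subgroup_zpow.
have hqi : S (zpow (q i) (v 0 i)) by apply: subgroup_zpow.
rewrite ih zpowM; last exact: S_abelian.
by rewrite -!gmulA; congr (_ ** _); rewrite !gmulA (S_abelian hqi hps).
Qed.

Lemma gen_zprod_row m (y : 'I_m -> G) : (forall i, S (y i)) ->
  forall g, gen (fun a => exists i, a = y i) g -> exists e, g = zprod_row y e.
Proof.
move=> yS; apply: gen_sub.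
- split; first by exists 0; rewrite /zprod_row zprod_seq0.
  split=> [_ _ [v ->] [w ->]|_ [v ->]].
    by exists (v + w); rewrite (zprod_rowD S_subgroup S_abelian).
  by exists (- v); rewrite (zprod_rowN S_subgroup S_abelian).
- move=> _ [i ->]; exists (delta_mx 0 i).
  by rewrite -(scale1r (delta_mx 0 i)) zprod_row_delta zpow1.
Qed.

End AbelianProducts.

Section LatticeBasis.
Variables (n D : nat) (L : 'rV[int]_n -> Prop).
Hypothesis D_gt0 : (0 < D)%N.
Hypothesis L_add : forall u v, L u -> L v -> L (u + v).
Hypothesis L_scale : forall (c : int) u, L u -> L (c *: u).
Hypothesis L_delta : forall i, L (D%:Z *: delta_mx 0 i).

Definition supported_upto (i : 'I_n) (v : 'rV[int]_n) := forall j : 'I_n, (i < j)%N -> v 0 j = 0.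

Definition has_pivot i (p : nat) :=
  (0 < p)%N /\ exists v, [/\ L v, supported_upto i v & v 0 i = p%:Z].

Lemma has_pivot_D i : has_pivot i D.
Proof.
split=> //; exists (D%:Z *: delta_mx 0 i).
split=> [||]; rewrite /supported_upto ?mxE ?eqxx ?mulr1 //.
by move=> j ij; rewrite !mxE; case: (j =P i) ij => [-> |_]; rewrite ?ltnn ?andbF ?mulr0.
Qed.

(* [pivot i] is the least positive i-th coordinate of a vector of [L] vanishing
   beyond [i]; such vectors form a triangular basis of [L]. *)
Definition pivot i : nat :=
  ex_minn (ex_intro (fun p => `[< has_pivot i p >]) D (asboolT (has_pivot_D i))).

Lemma pivotP i : has_pivot i (pivot i) /\ forall q, has_pivot i q -> (pivot i <= q)%N.
Proof.
rewrite /pivot; case: ex_minnP => p /asboolW hp pmin; split=> // q hq.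
by apply: pmin; apply: asboolT.
Qed.

Lemma pivot_dvd i v : L v -> supported_upto i v -> ((pivot i)%:Z %| (v 0 i)%R)%Z.
Proof.
move=> Lv sv; have [[p_gt0 [w [Lw sw wi]]] pmin] := pivotP i.
set p := (pivot i)%:Z in wi *; have p_neq0 : p != 0 by rewrite eqz_nat -lt0n.
set q := ((v 0 i)%R %/ p)%Z; set r := ((v 0 i)%R %% p)%Z.
apply/dvdz_mod0P; rewrite -/r.
have u_piv : [/\ L (v - q *: w), supported_upto i (v - q *: w) & (v - q *: w) 0 i = r].
  split; first by apply: L_add => //; rewrite -scaleNr; apply: L_scale.
    by move=> j ij; rewrite !mxE (sv j ij) (sw j ij) mulr0 subr0.
  by rewrite !mxE wi {1}(divz_eq (v 0 i) p) addrAC subrr add0r.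
have : 0 <= r < p by rewrite modz_ge0 // ltz_pmod // ltz_nat.
case: r u_piv => -[|r'] // u_piv /andP[_ r_lt].
have /pmin : has_pivot i r'.+1 by split=> //; exists (v - q *: w).
by rewrite leqNgt -ltz_nat r_lt.
Qed.

Lemma pivot_attained i : exists v, [/\ L v, supported_upto i v & v 0 i = (pivot i)%:Z].
Proof. by case: (pivotP i) => -[]. Qed.

Definition pivot_vec i : 'rV[int]_n := sval (cid (pivot_attained i)).

Lemma pivot_vecP i : [/\ L (pivot_vec i), supported_upto i (pivot_vec i)
  & pivot_vec i 0 i = (pivot i)%:Z].
Proof. by rewrite /pivot_vec; case: cid. Qed.

Definition pivot_mx : 'M[int]_n := \matrix_(i, j) pivot_vec i 0 j.

Lemma row_pivot_mx i : row i pivot_mx = pivot_vec i.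
Proof. by apply/rowP => j; rewrite !mxE. Qed.

Lemma pivot_mx_free (a : 'rV[int]_n) : a *m pivot_mx = 0 -> a = 0.
Proof.
move=> aB; have trig : is_trig_mx pivot_mx.
  by apply/is_trig_mxP => i j ij; rewrite mxE; case: (pivot_vecP i) => _ /(_ j ij) ->.
have det_neq0 : \det pivot_mx != 0.
  rewrite det_trig //; apply/prodf_neq0 => i _; rewrite mxE; case: (pivot_vecP i) => _ _ ->.
  by rewrite eqz_nat -lt0n; case: (pivotP i) => -[].
have : a *m pivot_mx *m \adj pivot_mx = 0 by rewrite aB mul0mx.
rewrite -mulmxA mul_mx_adj mul_mx_scalar => /rowP h; apply/rowP => j.
by have := h j; rewrite !mxE => /eqP; rewrite mulf_eq0 (negPf det_neq0) => /eqP.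
Qed.

Lemma pivot_mx_span v : L v -> exists a, v = a *m pivot_mx.
Proof.
suff ind t : forall v, L v -> (forall j : 'I_n, (t <= j)%N -> v 0 j = 0) ->
    exists a, v = a *m pivot_mx.
  by move=> Lv; apply: (ind n) => // j; rewrite leqNgt ltn_ord.
elim: t => [|t ih] {}v Lv vt.
  by exists 0; rewrite mul0mx; apply/rowP => j; rewrite mxE vt.
have [tn|nt] := ltnP t n; last by apply: ih => // j /(leq_trans nt); rewrite leqNgt ltn_ord.
pose i := Ordinal tn; pose q := ((v 0 i)%R %/ (pivot i)%:Z)%Z.
have [Lw sw wi] := pivot_vecP i.
have v_sup : supported_upto i v by move=> j; apply: vt.
have [a wa] : exists a, v - q *: pivot_vec i = a *m pivot_mx.
  apply: ih; first by apply: L_add => //; rewrite -scaleNr; apply: L_scale.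
  move=> j; rewrite leq_eqVlt => /orP[/eqP tj|tj]; last first.
    by rewrite !mxE (sw j tj) (vt j tj) mulr0 subr0.
  have -> : j = i by apply: val_inj; rewrite /= tj.
  by rewrite !mxE wi divzK ?subrr //; exact: pivot_dvd.
exists (a + q *: delta_mx 0 i).
by rewrite mulmxDl -wa -scalemxAl -rowE row_pivot_mx subrK.
Qed.

End LatticeBasis.

Lemma lattice_basis n (D : nat) (L : 'rV[int]_n -> Prop) : (0 < D)%N ->
  (forall u v, L u -> L v -> L (u + v)) -> (forall (c : int) u, L u -> L (c *: u)) ->
  (forall i, L (D%:Z *: delta_mx 0 i)) ->
  exists B : 'M[int]_n, [/\ forall i, L (row i B),
    forall v, L v -> exists a, v = a *m B & forall a : 'rV[int]_n, a *m B = 0 -> a = 0].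
Proof.
move=> D_gt0 L_add L_scale L_delta; exists (pivot_mx D_gt0 L_delta); split.
- by move=> i; rewrite row_pivot_mx; case: (pivot_vecP D_gt0 L_delta i).
- exact: pivot_mx_span.
- exact: pivot_mx_free.
Qed.

Lemma pigeonhole_fun (I : finType) (T : Type) (s : list T) (f : nat -> I -> T) :
  (forall k i, List.In (f k i) s) -> exists a b, (a < b)%N /\ forall i, f a i = f b i.
Proof.
move=> fs.
have /choice [code hcode] : forall ki : nat * I,
    exists j : 'I_(length s), List.nth j s (f ki.1 ki.2) = f ki.1 ki.2.
  move=> [k i]; have [j [js jn]] := List.In_nth _ _ (f k i) (fs k i).
  by exists (Ordinal (introT ltP js)).
pose c (k : 'I_(#|{ffun I -> 'I_(length s)}|.+1)) := [ffun i => code (val k, i)].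
have /injectivePn [a [b ab cab]] : ~~ injectiveb c.
  by apply/injectiveP => /leq_card; rewrite card_ord ltnn.
have fab i : f a i = f b i.
  have := congr1 (fun g : {ffun I -> 'I_(length s)} => g i) cab; rewrite !ffunE => cabi.
  rewrite -(hcode (val a, i)) -(hcode (val b, i)) /= cabi.
  by apply: List.nth_indep; apply/ltP.
case: (ltngtP a b) => [lt|gt|/val_inj eq]; first by exists a, b.
  by exists b, a; split=> // i; rewrite fab.
by rewrite eq eqxx in ab.
Qed.

Lemma commute_of_commutator_zpow (G : group) (g h : G) (a b : nat) : (a <= b)%N ->
  commutator g (zpow h a) = commutator g (zpow h b) ->
  zpow h (b - a)%N ** g = g ** zpow h (b - a)%N.
Proof.
move=> ab; rewrite /commutator.
have -> : zpow h b = zpow h (b - a)%N ** zpow h a by rewrite -zpowD -PoszD subnK.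
set c := zpow h (b - a)%N; set k := zpow h a; gsimpl => /gmulI/gmulI eq_conj.
have {}eq_conj : g = ginv c ** g ** c by apply: (@gmulIr _ k); rewrite eq_conj; gsimpl.
by rewrite {1}eq_conj; gsimpl.
Qed.

Lemma central_power (G : group) n (x : 'I_n -> G) :
  (forall g, gen (fun a => exists i, a = x i) g) -> finite_set (@derived G) ->
  exists D : nat, (0 < D)%N /\ forall i, center (zpow (x i) D).
Proof.
move=> hgen [s hs].
have [a [b [ab fab]]] := pigeonhole_fun
  (fun k (ij : 'I_n * 'I_n) => hs _ (derived_commutator (x ij.2) (zpow (x ij.1) k))).
exists (b - a)%N; split=> [|i]; first by rewrite subn_gt0.
apply: (center_gen hgen) => _ [j ->].
exact: commute_of_commutator_zpow (ltnW ab) (fab (i, j)).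
Qed.

Lemma mul_row_diag_mx m n (nm : (n <= m)%N) (d : seq int) (v : 'rV[int]_m) (j : 'I_n) :
  (v *m \matrix_(i < m, j < n) (d`_i *+ (i == j :> nat))) 0 j = v 0 (widen_ord nm j) * d`_j.
Proof.
rewrite mxE (bigD1 (widen_ord nm j)) //= big1 ?addr0 => [|i ij]; first by rewrite mxE eqxx.
rewrite mxE (_ : (i == j :> nat) = false) ?mulr0n ?mulr0 //.
by apply: contraNF ij => /eqP ij; apply/eqP/val_inj.
Qed.

Lemma diag_mx_left_inv m n (d : seq int) (X : 'M[int]_(n, m)) :
  X *m \matrix_(i < m, j < n) (d`_i *+ (i == j :> nat)) = 1%:M ->
  (n <= m)%N /\ forall i : 'I_m, (i < n)%N -> d`_i != 0.
Proof.
set S := \matrix_(i, j) _ => XS.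
have d_neq0 (j : 'I_n) : exists2 i : 'I_m, i = j :> nat & d`_i != 0.
  have /existsP [i] : [exists i, X j i * S i j != 0].
    apply: contraT => /existsPn S0; have := congr1 (fun A : 'M_n => A j j) XS.
    rewrite !mxE eqxx big1 => [/eqP|i _]; first by rewrite eq_sym /= mulr1n oner_eq0.
    by apply/eqP; exact: negbNE (S0 i).
  rewrite /S mxE; have [ij|_] := eqVneq (i : nat) j; last by rewrite mulr0n mulr0 eqxx.
  by rewrite mulr1n mulf_eq0 negb_or => /andP[_ di]; exists i.
split=> [|i lt_in]; last by have [i' /= <-] := d_neq0 (Ordinal lt_in).
rewrite leqNgt; apply/negP => lt_mn; have [i /= im _] := d_neq0 (Ordinal lt_mn).
by have := ltn_ord i; rewrite im ltnn.
Qed.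

(* Through the Smith normal form M = L D R, the left inverse of M is one of D. *)
Lemma int_mx_left_inv_kernel m n (M : 'M[int]_(m, n)) (W : 'M[int]_(n, m)) :
  W *m M = 1%:M ->
  (n <= m)%N /\ exists2 U : 'M[int]_m, U \in unitmx &
    forall v : 'rV[int]_m, v *m (U *m M) = 0 <-> forall i : 'I_m, (i < n)%N -> v 0 i = 0.
Proof.
move=> WM; have [L L_unit [R R_unit [d _ defM]]] := int_Smith_normal_form M.
set S := \matrix_(i, j) _ in defM.
have [nm d_neq0] : (n <= m)%N /\ forall i : 'I_m, (i < n)%N -> d`_i != 0.
  apply: (@diag_mx_left_inv _ _ _ (R *m W *m L)).
  have : R *m (W *m M) *m invmx R = 1%:M by rewrite WM mulmx1 mulmxV.
  by rewrite defM !mulmxA mulmxK.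
split=> //; exists (invmx L); first by rewrite unitmx_inv.
have -> : invmx L *m M = S *m R by rewrite defM -!mulmxA mulKmx.
move=> v; rewrite mulmxA; split=> [vSR i lt_in|v0].
  have vS : v *m S = 0 by rewrite -(mulmxK R_unit (v *m S)) vSR mul0mx.
  have := congr1 (fun u : 'rV_n => u 0 (Ordinal lt_in)) vS.
  rewrite mul_row_diag_mx mxE => /eqP; rewrite mulf_eq0 /= (negPf (d_neq0 i lt_in)) orbF.
  have -> : widen_ord nm (Ordinal lt_in) = i by apply: val_inj.
  by move/eqP.
have -> : v *m S = 0.
  by apply/rowP => j; rewrite mul_row_diag_mx v0 ?mul0r ?mxE //; exact: (ltn_ord j).
by rewrite mul0mx.
Qed.

Section Rank.
Variable G : group.
Implicit Types (S : G -> Prop).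

Lemma finite_generates S : subgroup S -> finite_set S ->
  exists m (y : 'I_m -> G), generates S y.
Proof.
move=> hS [s hs]; exists (length s).
pose y (k : 'I_(length s)) :=
  let g := List.nth k s (gone G) in if `[< S g >] then g else gone G.
exists y => g; split=> [Sg|].
  have [k [ks kg]] := List.In_nth s g (gone G) (hs g Sg).
  by apply: mem_gen; exists (Ordinal (introT ltP ks)); rewrite /y /= kg asboolT.
apply: gen_sub => // _ [k ->]; rewrite /y; case: asboolP => // _; exact: subgroup1.
Qed.

Lemma has_rank_exists S : (exists m (y : 'I_m -> G), generates S y) -> exists r, has_rank S r.
Proof.
move=> [m [y hy]]; have ex : exists m, `[< exists y : 'I_m -> G, generates S y >].
  by exists m; apply: asboolT; exists y.
exists (ex_minn ex); case: ex_minnP => r /asboolW hr rmin; split=> // k w hw.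
by apply: rmin; apply: asboolT; exists w.
Qed.

Definition cat_family m1 m2 (y1 : 'I_m1 -> G) (y2 : 'I_m2 -> G) (k : 'I_(m1 + m2)) : G :=
  match split k with inl i => y1 i | inr j => y2 j end.

Lemma cat_family_lshift m1 m2 (y1 : 'I_m1 -> G) (y2 : 'I_m2 -> G) i :
  cat_family y1 y2 (lshift m2 i) = y1 i.
Proof. by rewrite /cat_family (unsplitK (inl _ i)). Qed.

Lemma cat_family_rshift m1 m2 (y1 : 'I_m1 -> G) (y2 : 'I_m2 -> G) j :
  cat_family y1 y2 (rshift m1 j) = y2 j.
Proof. by rewrite /cat_family (unsplitK (inr _ j)). Qed.

End Rank.

Section SplitExtension.
Variables (G : group) (Z K : G -> Prop) (n : nat) (F : 'rV[int]_n -> G).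
Hypothesis Z_subgroup : subgroup Z.
Hypothesis Z_abelian : forall a b, Z a -> Z b -> a ** b = b ** a.
Hypothesis K_subgroup : subgroup K.
Hypothesis K_sub_Z : forall b, K b -> Z b.
Hypothesis F_Z : forall a, Z (F a).
Hypothesis FD : forall a b, F (a + b) = F a ** F b.
Hypothesis F_K : forall a, K (F a) -> a = 0.
Hypothesis Z_split : forall z, Z z -> exists a b, K b /\ z = F a ** b.

Lemma F0 : F 0 = gone G.
Proof. by apply: (@gmulI _ (F 0)); rewrite -FD addr0 gmul1r. Qed.

Lemma FN a : F (- a) = ginv (F a).
Proof. by apply/esym/ginv_uniq; rewrite -FD subrr F0. Qed.

Lemma F_scale (c : int) a : F (c *: a) = zpow (F a) c.
Proof.
elim/int_rect: c => [|c ih|c ih]; first by rewrite scale0r F0.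
  by rewrite intS addrC zpowS -ih scalerDl scale1r FD.
by rewrite intS opprD addrC zpowSV -ih scalerDl scaleN1r FD FN.
Qed.

Lemma F_zprod_row a : F a = zprod_row (fun i => F (delta_mx 0 i)) a.
Proof.
rewrite {1}(row_sum_delta a) /zprod_row -big_enum /=.
elim: (enum 'I_n) => [|i s ih] /=; first by rewrite big_nil F0.
by rewrite big_cons FD F_scale ih.
Qed.

Lemma F_inj : injective F.
Proof.
move=> a b e; apply/eqP; rewrite -subr_eq0; apply/eqP/F_K.
by rewrite FD FN e gmulVr; exact: subgroup1.
Qed.

Definition F_image g := exists a, F a = g.

Lemma F_image_subgroup : subgroup F_image.
Proof.
split; first by exists 0; exact: F0.
split=> [_ _ [a <-] [b <-]|_ [a <-]]; first by exists (a + b); rewrite FD.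
by exists (- a); rewrite FN.
Qed.

Lemma F_image_iso : iso_Zn F_image n.
Proof. by exists F; split; [|split; [exact: F_inj|]]. Qed.

Lemma F_image_K g : F_image g -> K g -> g = gone G.
Proof. by move=> [a <-] /F_K ->; exact: F0. Qed.

Lemma Z_F_image_K z : Z z <-> exists a b, F_image a /\ K b /\ z = a ** b.
Proof.
split=> [/Z_split [a [b [Kb ->]]]|[_ [b [[a <-] [Kb ->]]]]].
  by exists (F a), b; split=> //; exists a.
exact: subgroupM Z_subgroup (F_Z a) (K_sub_Z Kb).
Qed.

Lemma generates_cat r (w : 'I_r -> G) :
  generates K w -> generates Z (cat_family (fun i => F (delta_mx 0 i)) w).
Proof.
move=> hw g; split=> [Zg|].
  have [a [b [Kb ->]]] := Z_split Zg; apply: subgroupM (gen_subgroup _) _ _.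
    rewrite F_zprod_row; apply: subgroup_zprod_row (gen_subgroup _) _ => i.
    by apply: mem_gen; exists (lshift r i); rewrite cat_family_lshift.
  apply: (gen_sub (gen_subgroup _) _ ((hw b).1 Kb)) => _ [j ->].
  by apply: mem_gen; exists (rshift n j); rewrite cat_family_rshift.
apply: gen_sub Z_subgroup _ g => _ [k ->]; rewrite /cat_family; case: split => [i|j] //.
by apply/K_sub_Z/(hw (w j)); apply: mem_gen; exists j.
Qed.

Section Generators.
Variables (m : nat) (y : 'I_m -> G).
Hypothesis y_gen : generates Z y.

Lemma generators_Z j : Z (y j).
Proof. by apply/y_gen; apply: mem_gen; exists j. Qed.

Lemma Z_zprod_row g : Z g -> exists e, g = zprod_row y e.
Proof. by move=> /y_gen; exact: (gen_zprod_row Z_subgroup Z_abelian generators_Z). Qed.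

Lemma generators_coords : exists (M : 'M[int]_(m, n)) (b : 'I_m -> G),
  (forall j, K (b j)) /\ forall j, y j = F (row j M) ** b j.
Proof.
have /choice [ab hab] : forall j, exists ab : 'rV[int]_n * G, K ab.2 /\ y j = F ab.1 ** ab.2.
  by move=> j; have [a [b hab]] := Z_split (generators_Z j); exists (a, b).
exists (\matrix_j (ab j).1), (fun j => (ab j).2); split=> j; first by case: (hab j).
by rewrite rowK; case: (hab j).
Qed.

Section Coordinates.
Variables (M : 'M[int]_(m, n)) (b : 'I_m -> G).
Hypothesis b_K : forall j, K (b j).
Hypothesis y_coords : forall j, y j = F (row j M) ** b j.

Lemma zprod_row_coords e : zprod_row y e = F (e *m M) ** zprod_row b e.
Proof.
have -> : y = fun j => F (row j M) ** b j by apply: funext.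
rewrite (zprod_rowM Z_subgroup Z_abelian _ (fun j => F_Z _) (fun j => K_sub_Z (b_K j))).
congr (_ ** _); rewrite F_zprod_row -(zprod_row_mulmx Z_subgroup Z_abelian (fun i => F_Z _)).
by congr zprod_row; apply: funext => j; exact: F_zprod_row.
Qed.

Lemma coords_K e : K (zprod_row y e) -> e *m M = 0.
Proof.
rewrite zprod_row_coords => Ke; apply: F_K.
have Kb : K (zprod_row b e) by exact: subgroup_zprod_row.
by have := subgroupM K_subgroup Ke (subgroupV K_subgroup Kb); gsimpl.
Qed.

Lemma coords_left_inv : exists W : 'M[int]_(n, m), W *m M = 1%:M.
Proof.
have /choice [w hw] : forall i : 'I_n, exists e : 'rV[int]_m, e *m M = delta_mx 0 i.
  move=> i; have [e he] := Z_zprod_row (F_Z (delta_mx 0 i)); exists e.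
  have : K (F (- (e *m M) + delta_mx 0 i)).
    by rewrite FD FN he zprod_row_coords gmulK; exact: subgroup_zprod_row.
  by move/F_K/eqP; rewrite addrC subr_eq0 => /eqP.
by exists (\matrix_i w i); apply/row_matrixP => i; rewrite row_mul rowK hw row1.
Qed.

Lemma coords_generates_K : (n <= m)%N /\ exists w : 'I_(m - n) -> G, generates K w.
Proof.
have [W WM] := coords_left_inv.
have [nm [U U_unit kerUM]] := int_mx_left_inv_kernel WM.
(* The generators [y'] have their last m - n members in K, and these generate K. *)
pose y' i := zprod_row y (row i U).
have zprod_y' e : zprod_row y' e = zprod_row y (e *m U).
  exact: (zprod_row_mulmx Z_subgroup Z_abelian generators_Z).
have y'K (i : 'I_m) : (n <= i)%N -> K (y' i).
  move=> ni; have UM0 : row i U *m M = 0.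
    rewrite rowE -mulmxA; apply/kerUM => j jn; rewrite mxE.
    by rewrite eqxx; case: (j =P i) => [ji|]; first by rewrite -ji leqNgt jn in ni.
  by rewrite /y' zprod_row_coords UM0 F0 gmul1; exact: subgroup_zprod_row.
have tail (t : 'I_(m - n)) : (n + t < m)%N by rewrite -ltn_subRL.
split=> //; exists (fun t => y' (Ordinal (tail t))) => g; split=> [Kg|]; last first.
  by apply: (gen_sub K_subgroup) => _ [t ->]; apply: y'K; exact: leq_addr.
have [e ge] := Z_zprod_row (K_sub_Z Kg).
have e_head : forall i : 'I_m, (i < n)%N -> (e *m invmx U) 0 i = 0.
  by apply/kerUM; rewrite mulmxA mulmxKV //; apply: coords_K; rewrite -ge.
rewrite ge -(mulmxKV U_unit e) -zprod_y'; apply: subgroup_zprod_seq (gen_subgroup _) _ => i.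
have [lt_in|ge_in] := ltnP i n; first by rewrite e_head //; exact: subgroup1 (gen_subgroup _).
apply: subgroup_zpow (gen_subgroup _) _; apply: mem_gen.
have it : (i - n < m - n)%N by rewrite ltn_subRL subnKC.
by exists (Ordinal it); congr y'; apply: val_inj => /=; rewrite subnKC.
Qed.

End Coordinates.

Lemma generates_K_of_Z : (n <= m)%N /\ exists w : 'I_(m - n) -> G, generates K w.
Proof.
by have [M [b [b_K y_coords]]] := generators_coords; exact: coords_generates_K b_K y_coords.
Qed.

End Generators.

Lemma has_rank_split r : has_rank K r -> has_rank Z (n + r).
Proof.
move=> [[w hw] rmin]; split.
  by exists (cat_family (fun i => F (delta_mx 0 i)) w); exact: generates_cat.
move=> m y hy; have [nm [w' hw']] := generates_K_of_Z hy.
by rewrite -(subnKC nm) leq_add2l; exact: rmin _ w' hw'.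
Qed.

End SplitExtension.

Definition center_derived (G : group) (g : G) := center g /\ derived g.

Lemma center_derived_subgroup (G : group) : subgroup (@center_derived G).
Proof. exact: subgroupI center_subgroup derived_subgroup. Qed.

Section CenterSplit.
Variables (G : group) (n : nat) (x : 'I_n -> G).
Hypothesis x_gen : forall g : G, gen (fun a => exists i, a = x i) g.
Hypothesis derived_finite : finite_set (@derived G).
Hypothesis x_free : forall k : 'I_n -> int, derived (zprod x k) -> forall i, k i = 0.

Let eqC_abelian (a b : G) : True -> True -> eqC (a ** b) (b ** a).
Proof. by move=> _ _; exact: eqC_comm. Qed.

Lemma eqC_zprod_row_x g : exists v, eqC g (zprod_row x v).
Proof.
apply: (gen_sub (S := fun g => exists v, eqC g (zprod_row x v))) (x_gen g).
- split; first by exists 0; rewrite /zprod_row zprod_seq0; reflexivity.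
  split=> [a b [v hv] [w hw]|a [v hv]].
    by exists (v + w); rewrite hv hw (zprod_rowD subgroupT eqC_abelian (fun=> I)); reflexivity.
  by exists (- v); rewrite hv (zprod_rowN subgroupT eqC_abelian (fun=> I)); reflexivity.
- move=> _ [i ->]; exists (delta_mx 0 i).
  by rewrite -(scale1r (delta_mx 0 i)) zprod_row_delta zpow1; reflexivity.
Qed.

Lemma zprod_row_x_derived v : derived (zprod_row x v) -> v = 0.
Proof. by move=> /x_free v0; apply/rowP => i; rewrite mxE v0. Qed.

(* The image of the center in G/C, in the coordinates given by [x]. *)
Definition center_image (v : 'rV[int]_n) := exists z, center z /\ eqC z (zprod_row x v).

Lemma center_imageD u v : center_image u -> center_image v -> center_image (u + v).
Proof.
move=> [z1 [c1 e1]] [z2 [c2 e2]]; exists (z1 ** z2).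
split; first exact: subgroupM center_subgroup c1 c2.
by rewrite e1 e2 (zprod_rowD subgroupT eqC_abelian (fun=> I)); reflexivity.
Qed.

Lemma center_imageZ (c : int) v : center_image v -> center_image (c *: v).
Proof.
move=> [z [cz e]]; exists (zpow z c); split; first exact: subgroup_zpow center_subgroup cz.
by rewrite (zpow_congr c e) (zpow_zprod_row subgroupT eqC_abelian (fun=> I)); reflexivity.
Qed.

Lemma center_split : exists F : 'rV[int]_n -> G,
  [/\ forall a b, F (a + b) = F a ** F b, forall a, center (F a),
      forall a, derived (F a) -> a = 0
    & forall z, center z -> exists a b, center_derived b /\ z = F a ** b].
Proof.
have [D [D_gt0 xD]] := central_power x_gen derived_finite.
have center_image_delta i : center_image (D%:Z *: delta_mx 0 i).
  by exists (zpow (x i) D); rewrite zprod_row_delta; split; [exact: xD | reflexivity].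
have [B [B_image B_span B_free]] :=
  lattice_basis D_gt0 center_imageD center_imageZ center_image_delta.
have /choice [z hz] := B_image.
have z_center i : center (z i) by case: (hz i).
have F_eqC a : eqC (zprod_row z a) (zprod_row x (a *m B)).
  rewrite (zprod_row_congr _ (fun i => proj2 (hz i))).
  exact: (zprod_row_mulmx subgroupT eqC_abelian (fun=> I)).
exists (zprod_row z); split.
- exact: (zprod_rowD center_subgroup (@center_abelian G) z_center).
- by move=> a; exact: subgroup_zprod_row center_subgroup z_center.
- move=> a /(eqC_derived (F_eqC a)) /zprod_row_x_derived; exact: B_free.
move=> w cw; have [v hv] := eqC_zprod_row_x w.
have [a va] := B_span v (ex_intro _ w (conj cw hv)).
exists a, (ginv (zprod_row z a) ** w); split; last by gsimpl.
split; last by rewrite -/(eqC _ _) F_eqC -va hv; reflexivity.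
apply: subgroupM center_subgroup _ cw; apply: subgroupV center_subgroup _.
exact: subgroup_zprod_row center_subgroup z_center.
Qed.

End CenterSplit.

Local Close Scope ring_scope.

Theorem proposition5 (G : group) (n : nat) (x : 'I_n -> G)
  (* G is generated by x_1, ..., x_n *)
  (hgen : forall g : G, gen (fun a => exists i, a = x i) g)
  (* the commutator subgroup C = [G,G] is finite *)
  (hfin : finite_set (@derived G))
  (* G/C is free abelian with basis the images of x_1..x_n: the images generate
     G/C (automatic from hgen) and are Z-linearly independent in G/C *)
  (hbasis : forall k : 'I_n -> int, derived (zprod x k) -> forall i, k i = 0%R) :
  (exists Zt : G -> Prop,
      subgroup Zt /\
      (forall g, Zt g -> center g) /\
      iso_Zn Zt n /\
      (forall g, Zt g -> center g -> derived g -> g = gone G) /\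
      (forall z, center z <->
         exists a b, Zt a /\ (center b /\ derived b) /\ z = gmul a b)) /\
  (exists r : nat,
      has_rank (fun g : G => center g /\ derived g) r /\
      has_rank (@center G) (n + r)).
Proof.
have [F [FD F_center F_K center_decomp]] := center_split hgen hfin hbasis.
have F_K' a : center_derived (F a) -> a = 0%R by move=> [_]; exact: F_K.
have K_subgroup := @center_derived_subgroup G.
have K_center (g : G) : center_derived g -> center g by case.
split.
  exists (F_image F); split; first exact: F_image_subgroup FD.
  split; first by move=> _ [a <-].
  split; first exact: F_image_iso K_subgroup FD F_K'.
  split; first by move=> g Fg cg dg; exact: (F_image_K FD F_K' Fg (conj cg dg)).
  exact: (Z_F_image_K center_subgroup K_center F_center center_decomp).
have [r rK] : exists r, has_rank (@center_derived G) r.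
  apply/has_rank_exists/finite_generates => //.
  by have [s hs] := hfin; exists s => g [_ dg]; exact: hs.
exists r; split=> //.
exact: (has_rank_split center_subgroup (@center_abelian G) K_subgroup K_center
  F_center FD F_K' center_decomp rK).
Qed.
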